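(* Let $G$ be an $X$-generated group with Cayley graph $\Gamma_X$, let $P$ be either $\operatorname{Sub}\Gamma_X$ or $\operatorname{CSub}\Gamma_X$, and let $()^c$ be a $G$-invariant closure operator on $(P,\subseteq)$. Let $S_c=\{(\Delta,g): g\in G,\ \Delta\in P \text{ compact},\ 1,g\in V(\Delta)\}$ with operations $(\Delta,g)(\Xi,h)=((\Delta\cup g\Xi)^c,gh)$ and $(\Delta,g)^{-1}=(g^{-1}\Delta,g^{-1})$. Then $S_c$ is an $E$-unitary inverse monoid (with identity $(\{1\}^c,1)$) whose greatest group image is $G$ via $(\Delta,g)\mapsto g$, and whose natural partial order is given by $(\Delta,g)\le(\Xi,h)$ iff $g=h$ and $\Xi\subseteq\Delta$. Moreover: (1) if $P=\operatorname{CSub}\Gamma_X$, then $S_c$ is $X$-generated as an inverse monoid via $x\mapsto(\langle\overline x\rangle^c,x_G)$, and the Schützenberger graph of $(\Delta,g)$ is isomorphic (as an $X$-labeled graph) to $\Delta$; (2) if $P=\operatorname{Sub}\Gamma_X$, then $S_c$ is an $F$-inverse monoid with $(\Delta,g)^{\mathfrak m}=(\{1,g\}^c,g)$ (where $\{1,g\}$ is the subgraph with vertices $1,g$ and no edges), it is $X$-generated as an $F$-inverse monoid via $x\mapsto(\langle\overline x\rangle^c,x_G)$, and the $F$-Schützenberger graph of $(\Delta,g)$ equals $\Delta$.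
   Context: $\Gamma_X$ is the Cayley graph of the $X$-generated group $G$ (vertices $G$, edge labeled $x$ from $g$ to $gx_G$ for $x\in X\cup X^{-1}$, edges paired with inverses); subgraphs are closed under endpoints and inverses; $\operatorname{Sub}\Gamma_X$ (all subgraphs) and $\operatorname{CSub}\Gamma_X$ (connected subgraphs) are ordered by inclusion; $G$ acts on the left. A closure operator $()^c$ is $G$-invariant if $(g\Delta)^c=g\Delta^c$. A subgraph is compact (for $()^c$) if it equals $F^c$ for some finite $F\in P$. $\overline x$ is the edge path from $1$ labeled $x$ and $\langle\overline x\rangle$ the subgraph it spans. For an $X$-generated inverse monoid, its Cayley graph has vertex set $S$ and an edge labeled $x$ from $s$ to $sx_S$; the Schützenberger graph of $s$ is the strongly connected component containing $s$ (vertex set the $\mathcal R$-class of $s$). An $F$-inverse monoid is an inverse monoid where each $\sigma$-class has a greatest element $s^{\mathfrak m}$, viewed in signature $(\cdot,1,{}^{-1},{}^{\mathfrak m})$. For an $X$-generated $F$-inverse monoid $S$ with greatest group image $G$, terms in $\mathbb{I}\mathfrak{m}_X$ (formal expressions $u_0v_1^{\mathfrak m}u_1\cdots v_n^{\mathfrak m}u_n$) label journeys $\overline w=(\overline{u_0},(u_0v_1)_G\overline{u_1},\dots)$ in $\Gamma_X$; a subgraph $\Delta$ is $c_S$-closed if for all $u,v$ with $u_S=v_S$ and $g,h\in V(\Delta)$, $u$ labels a journey in $\Delta$ from $g$ to $h$ iff $v$ does; and the $F$-Schützenberger graph of $s=w_S$ is $\langle\overline w\rangle^{c_S}$, the smallest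 $c_S$-closed subgraph containing the graph spanned by the journey $\overline w$ (independent of the choice of $w$). *)

From Stdlib Require Import List Bool.
Set Implicit Arguments.
Unset Strict Implicit.

Record Group := {
  gcar :> Type;
  gmul : gcar -> gcar -> gcar;
  gone : gcar;
  ginv : gcar -> gcar;
  gmulA : forall a b c, gmul a (gmul b c) = gmul (gmul a b) c;
  gmul1 : forall a, gmul a gone = a;
  g1mul : forall a, gmul gone a = a;
  gmulV : forall a, gmul a (ginv a) = gone;
  gVmul : forall a, gmul (ginv a) a = gone }.

Arguments gmul {g}.
Arguments gone {g}.
Arguments ginv {g}.

(* Letters of X u X^{-1}: (x, true) stands for x, (x, false) for x^{-1}. *)
Definition letter (X : Type) := (X * bool)%type.
Definition linv (X : Type) (a : letter X) : letter X := (fst a, negb (snd a)).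

Definition lval (G : Group) (X : Type) (i : X -> G) (a : letter X) : G :=
  if snd a then i (fst a) else ginv (i (fst a)).
Fixpoint wval (G : Group) (X : Type) (i : X -> G) (w : list (letter X)) : G :=
  match w with nil => gone | a :: w' => gmul (lval i a) (wval i w') end.

Definition X_generated (G : Group) (X : Type) (i : X -> G) : Prop :=
  forall g : G, exists w, wval i w = g.

(* An edge of Gamma_X is determined by its initial vertex g and its label a;
   it goes from g to g * a_G. *)
Definition edge (G : Group) (X : Type) := (G * letter X)%type.
Definition etgt (G : Group) (X : Type) (i : X -> G) (e : edge G X) : G :=
  gmul (fst e) (lval i (snd e)).
Definition einv (G : Group) (X : Type) (i : X -> G) (e : edge G X) : edge G X :=
  (etgt i e, linv (snd e)).

(* a (not necessarily closed) pair (vertex set, edge set) *)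
Record subgraph (G : Group) (X : Type) := mkSG {
  sv : G -> Prop;
  se : edge G X -> Prop }.
Arguments mkSG {G X}.

Definition is_subgraph (G : Group) (X : Type) (i : X -> G) (D : subgraph G X) :=
  forall e, se D e -> sv D (fst e) /\ sv D (etgt i e) /\ se D (einv i e).

Definition sub_le (G : Group) (X : Type) (D E : subgraph G X) : Prop :=
  (forall v, sv D v -> sv E v) /\ (forall e, se D e -> se E e).

Definition sg_union (G : Group) (X : Type) (D E : subgraph G X) : subgraph G X :=
  mkSG (fun v => sv D v \/ sv E v) (fun e => se D e \/ se E e).

Definition sg_translate (G : Group) (X : Type) (g : G) (D : subgraph G X)
  : subgraph G X :=
  mkSG (fun v => sv D (gmul (ginv g) v))
       (fun e => se D (gmul (ginv g) (fst e), snd e)).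

Definition sg_verts (G : Group) (X : Type) (l : list G) : subgraph G X :=
  mkSG (fun v => In v l) (fun _ => False).

Definition sg_letter (G : Group) (X : Type) (i : X -> G) (x : X) : subgraph G X :=
  mkSG (fun v => v = gone \/ v = i x)
       (fun e => e = (gone, (x, true)) \/ e = (i x, (x, false))).

Fixpoint walk_in (G : Group) (X : Type) (i : X -> G) (D : subgraph G X)
  (u : G) (w : list (letter X)) : Prop :=
  match w with
  | nil => True
  | a :: w' => se D (u, a) /\ walk_in i D (gmul u (lval i a)) w'
  end.

Definition connected (G : Group) (X : Type) (i : X -> G) (D : subgraph G X) :=
  forall u v, sv D u -> sv D v ->
    exists w, walk_in i D u w /\ gmul u (wval i w) = v.

(* membership in P : P = CSub Gamma_X if conn = true, P = Sub Gamma_X otherwise *)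
Definition inP (G : Group) (X : Type) (i : X -> G) (conn : bool) (D : subgraph G X) :=
  is_subgraph i D /\ (conn = true -> connected i D).

Definition finite_sg (G : Group) (X : Type) (D : subgraph G X) : Prop :=
  (exists l, forall v, sv D v -> In v l) /\ (exists l, forall e, se D e -> In e l).

Definition closure_op (G : Group) (X : Type) (i : X -> G) (conn : bool)
  (c : subgraph G X -> subgraph G X) : Prop :=
  (forall D, inP i conn D ->
     inP i conn (c D) /\ sub_le D (c D) /\ c (c D) = c D) /\
  (forall D E, inP i conn D -> inP i conn E -> sub_le D E -> sub_le (c D) (c E)).

Definition G_invariant (G : Group) (X : Type) (i : X -> G) (conn : bool)
  (c : subgraph G X -> subgraph G X) : Prop :=
  forall (g : G) D, inP i conn D -> c (sg_translate g D) = sg_translate g (c D).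

Definition compact (G : Group) (X : Type) (i : X -> G) (conn : bool)
  (c : subgraph G X -> subgraph G X) (D : subgraph G X) : Prop :=
  exists F, inP i conn F /\ finite_sg F /\ D = c F.

Definition Sc (G : Group) (X : Type) (i : X -> G) (conn : bool)
  (c : subgraph G X -> subgraph G X) (p : subgraph G X * G) : Prop :=
  compact i conn c (fst p) /\ sv (fst p) gone /\ sv (fst p) (snd p).

Definition Sc_mul (G : Group) (X : Type) (c : subgraph G X -> subgraph G X)
  (p q : subgraph G X * G) : subgraph G X * G :=
  (c (sg_union (fst p) (sg_translate (snd p) (fst q))), gmul (snd p) (snd q)).

Definition Sc_inv (G : Group) (X : Type) (p : subgraph G X * G) : subgraph G X * G :=
  (sg_translate (ginv (snd p)) (fst p), ginv (snd p)).

Definition Sc_one (G : Group) (X : Type) (c : subgraph G X -> subgraph G X)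
  : subgraph G X * G := (c (@sg_verts G X (gone :: nil)), gone).

Definition Sc_gen (G : Group) (X : Type) (i : X -> G)
  (c : subgraph G X -> subgraph G X) (x : X) : subgraph G X * G :=
  (c (sg_letter i x), i x).

Definition Sc_m (G : Group) (X : Type) (c : subgraph G X -> subgraph G X)
  (p : subgraph G X * G) : subgraph G X * G :=
  (c (@sg_verts G X (gone :: snd p :: nil)), snd p).

Definition inverse_monoid (T : Type) (S : T -> Prop) (mul : T -> T -> T)
  (one : T) (inv : T -> T) : Prop :=
  (S one /\ (forall a b, S a -> S b -> S (mul a b)) /\ (forall a, S a -> S (inv a))) /\
  (forall a b d, S a -> S b -> S d -> mul a (mul b d) = mul (mul a b) d) /\
  (forall a, S a -> mul one a = a /\ mul a one = a) /\
  (forall a, S a ->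
     mul (mul a (inv a)) a = a /\ mul (mul (inv a) a) (inv a) = inv a /\
     (forall b, S b -> mul (mul a b) a = a -> mul (mul b a) b = b -> b = inv a)).

Definition idempotent (T : Type) (S : T -> Prop) (mul : T -> T -> T) (e : T) :=
  S e /\ mul e e = e.

Definition nat_le (T : Type) (S : T -> Prop) (mul : T -> T -> T) (a b : T) :=
  exists e, idempotent S mul e /\ a = mul e b.

Definition E_unitary (T : Type) (S : T -> Prop) (mul : T -> T -> T) :=
  forall e s, S s -> idempotent S mul e -> idempotent S mul (mul e s) ->
    idempotent S mul s.

Definition sigma_rel (T : Type) (S : T -> Prop) (mul : T -> T -> T) (a b : T) :=
  exists e, idempotent S mul e /\ mul e a = mul e b.

(* phi : S -> G is a surjective monoid morphism with kernel sigma, i.e.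
   G is (isomorphic via phi to) the greatest group image S / sigma *)
Definition greatest_group_image (T : Type) (S : T -> Prop) (mul : T -> T -> T)
  (one : T) (G : Group) (phi : T -> G) : Prop :=
  phi one = gone /\
  (forall a b, S a -> S b -> phi (mul a b) = gmul (phi a) (phi b)) /\
  (forall g : G, exists a, S a /\ phi a = g) /\
  (forall a b, S a -> S b -> (phi a = phi b <-> sigma_rel S mul a b)).

Definition F_inverse_with (T : Type) (S : T -> Prop) (mul : T -> T -> T)
  (m : T -> T) : Prop :=
  forall a, S a ->
    S (m a) /\ sigma_rel S mul (m a) a /\
    (forall b, S b -> sigma_rel S mul b a -> nat_le S mul b (m a)).

Definition gen_l (T X : Type) (inv : T -> T) (gen : X -> T) (a : letter X) : T :=
  if snd a then gen (fst a) else inv (gen (fst a)).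

Fixpoint word_eval (T X : Type) (mul : T -> T -> T) (one : T) (inv : T -> T)
  (gen : X -> T) (w : list (letter X)) : T :=
  match w with
  | nil => one
  | a :: w' => mul (gen_l inv gen a) (word_eval mul one inv gen w')
  end.

Definition X_gen_inverse_monoid (T X : Type) (S : T -> Prop) (mul : T -> T -> T)
  (one : T) (inv : T -> T) (gen : X -> T) : Prop :=
  (forall x, S (gen x)) /\
  (forall s, S s -> exists w, word_eval mul one inv gen w = s).

Inductive fterm (X : Type) :=
| FGen : X -> fterm X
| FOne : fterm X
| FMul : fterm X -> fterm X -> fterm X
| FInv : fterm X -> fterm X
| FM : fterm X -> fterm X.
Arguments FOne {X}.

Fixpoint fterm_eval (T X : Type) (mul : T -> T -> T) (one : T) (inv : T -> T)
  (m : T -> T) (gen : X -> T) (t : fterm X) : T :=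
  match t with
  | FGen x => gen x
  | FOne => one
  | FMul t1 t2 => mul (fterm_eval mul one inv m gen t1) (fterm_eval mul one inv m gen t2)
  | FInv t1 => inv (fterm_eval mul one inv m gen t1)
  | FM t1 => m (fterm_eval mul one inv m gen t1)
  end.

Definition X_gen_F_inverse_monoid (T X : Type) (S : T -> Prop) (mul : T -> T -> T)
  (one : T) (inv : T -> T) (m : T -> T) (gen : X -> T) : Prop :=
  (forall x, S (gen x)) /\
  (forall s, S s -> exists t, fterm_eval mul one inv m gen t = s).

Definition R_rel (T : Type) (S : T -> Prop) (mul : T -> T -> T) (s t : T) :=
  exists u v, S u /\ S v /\ t = mul s u /\ s = mul t v.

Definition lgraph_iso (A B EA EB L : Type)
  (VA : A -> Prop) (EdA : EA -> Prop) (srcA tgtA : EA -> A) (labA : EA -> L)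
  (VB : B -> Prop) (EdB : EB -> Prop) (srcB tgtB : EB -> B) (labB : EB -> L) :=
  exists (f : A -> B) (h : EA -> EB),
    (forall v, VA v -> VB (f v)) /\
    (forall v w, VA v -> VA w -> f v = f w -> v = w) /\
    (forall y, VB y -> exists v, VA v /\ f v = y) /\
    (forall e, EdA e -> EdB (h e)) /\
    (forall e e', EdA e -> EdA e' -> h e = h e' -> e = e') /\
    (forall y, EdB y -> exists e, EdA e /\ h e = y) /\
    (forall e, EdA e -> srcB (h e) = f (srcA e) /\ tgtB (h e) = f (tgtA e)
                        /\ labB (h e) = labA e).

(* The Schutzenberger graph of s (strongly connected component of s in the
   Cayley graph of the X-generated inverse monoid) is isomorphic to D *)
Definition schutz_iso (T X : Type) (S : T -> Prop) (mul : T -> T -> T)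
  (inv : T -> T) (gen : X -> T) (s : T) (G : Group) (i : X -> G)
  (D : subgraph G X) : Prop :=
  lgraph_iso
    (fun t => S t /\ R_rel S mul s t)
    (fun e : T * letter X => S (fst e) /\ R_rel S mul s (fst e) /\
                             R_rel S mul s (mul (fst e) (gen_l inv gen (snd e))))
    (fun e => fst e) (fun e => mul (fst e) (gen_l inv gen (snd e))) (fun e => snd e)
    (sv D) (se D) (fun e => fst e) (etgt i) (fun e => snd e).

(* An Im_X-term u0 v1^m u1 ... vn^m un, read as a sequence of letters and
   m-applied subterms. *)
Inductive imterm (X : Type) :=
| Iend : imterm X
| Ilet : letter X -> imterm X -> imterm X
| Im : imterm X -> imterm X -> imterm X.
Arguments Iend {X}.

Fixpoint im_eval (T X : Type) (mul : T -> T -> T) (one : T) (inv : T -> T)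
  (m : T -> T) (gen : X -> T) (t : imterm X) : T :=
  match t with
  | Iend => one
  | Ilet a t' => mul (gen_l inv gen a) (im_eval mul one inv m gen t')
  | Im v t' => mul (m (im_eval mul one inv m gen v)) (im_eval mul one inv m gen t')
  end.

Fixpoint im_gval (G : Group) (X : Type) (i : X -> G) (t : imterm X) : G :=
  match t with
  | Iend => gone
  | Ilet a t' => gmul (lval i a) (im_gval i t')
  | Im v t' => gmul (im_gval i v) (im_gval i t')
  end.

Fixpoint jverts (G : Group) (X : Type) (i : X -> G) (g : G) (t : imterm X) : G -> Prop :=
  match t with
  | Iend => fun v => v = g
  | Ilet a t' => fun v => v = g \/ jverts i (gmul g (lval i a)) t' v
  | Im w t' => fun v => v = g \/ jverts i (gmul g (im_gval i w)) t' v
  end.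

Fixpoint jedges (G : Group) (X : Type) (i : X -> G) (g : G) (t : imterm X)
  : edge G X -> Prop :=
  match t with
  | Iend => fun _ => False
  | Ilet a t' => fun e => e = (g, a) \/ e = einv i (g, a) \/
                          jedges i (gmul g (lval i a)) t' e
  | Im w t' => fun e => jedges i (gmul g (im_gval i w)) t' e
  end.

Definition journey_graph (G : Group) (X : Type) (i : X -> G) (t : imterm X)
  : subgraph G X := mkSG (jverts i gone t) (jedges i gone t).

Definition labels_journey (G : Group) (X : Type) (i : X -> G) (D : subgraph G X)
  (g h : G) (t : imterm X) : Prop :=
  (forall v, jverts i g t v -> sv D v) /\ (forall e, jedges i g t e -> se D e) /\
  h = gmul g (im_gval i t).

Definition cS_closed (T : Type) (G : Group) (X : Type) (i : X -> G)
  (mul : T -> T -> T) (one : T) (inv : T -> T) (m : T -> T) (gen : X -> T)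
  (D : subgraph G X) : Prop :=
  forall u v : imterm X,
    im_eval mul one inv m gen u = im_eval mul one inv m gen v ->
    forall g h, sv D g -> sv D h ->
      (labels_journey i D g h u <-> labels_journey i D g h v).

Definition F_schutz_graph (T : Type) (G : Group) (X : Type) (i : X -> G)
  (mul : T -> T -> T) (one : T) (inv : T -> T) (m : T -> T) (gen : X -> T)
  (s : T) (D : subgraph G X) : Prop :=
  (exists w, im_eval mul one inv m gen w = s) /\
  forall w, im_eval mul one inv m gen w = s ->
    is_subgraph i D /\ cS_closed i mul one inv m gen D /\
    sub_le (journey_graph i w) D /\
    (forall E, is_subgraph i E -> cS_closed i mul one inv m gen E ->
       sub_le (journey_graph i w) E -> sub_le D E).

(* Every element of S_c has the form (<t>^c, t_G) for a term t whose journey <t> lies in P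
   (a word when P = CSub, an arbitrary Im_X-term when P = Sub): a finite F with Delta = F^c is
   traversed inside Delta by a single such journey from 1 to g, using connectedness of Delta in
   the first case and jumps v^m (whose journey consists of two vertices) in the second.  Since
   G-invariance gives g Xi^c = (g Xi)^c, the product of two such elements is the element of the
   concatenated term; hence S_c is a monoid, generated as claimed, and the value of t in S_c is
   (<t>^c, t_G).  The rest is read off the two coordinates: idempotents are the (Delta, 1),
   sigma-classes are the fibres of the second coordinate, and the R-class of (Delta, g) is
   {(Delta, h) : h in Delta}.  For the F-Schutzenberger graph, a vertex or edge of <w>^c is put on
   the journey of a term with the same value as w by a detour made of jumps. *)

From Stdlib Require Import List Bool Classical FunctionalExtensionality PropExtensionality.
Set Implicit Arguments.
Unset Strict Implicit.

Section GroupFacts.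
Variable G : Group.
Implicit Types a b x y : G.

Lemma gmulKg a b : gmul (ginv a) (gmul a b) = b.
Proof. rewrite gmulA, gVmul, g1mul; reflexivity. Qed.

Lemma gmulKVg a b : gmul a (gmul (ginv a) b) = b.
Proof. rewrite gmulA, gmulV, g1mul; reflexivity. Qed.

Lemma gmulI a x y : gmul a x = gmul a y -> x = y.
Proof. intro E. rewrite <- (gmulKg a x), <- (gmulKg a y), E. reflexivity. Qed.

Lemma gmul_eq_self a x : gmul a x = a -> x = gone.
Proof. intro E. apply gmulI with a. rewrite gmul1. exact E. Qed.

Lemma ginv1 : ginv (@gone G) = gone.
Proof. rewrite <- (g1mul (ginv gone)). apply gmulV. Qed.

Lemma ginvK a : ginv (ginv a) = a.
Proof. apply gmulI with (ginv a). rewrite gmulV, gVmul. reflexivity. Qed.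

Lemma ginvM a b : ginv (gmul a b) = gmul (ginv b) (ginv a).
Proof.
  apply gmulI with (gmul a b). rewrite gmulV, <- gmulA, (gmulA b), gmulV, g1mul, gmulV.
  reflexivity.
Qed.

End GroupFacts.

Section Letters.
Variables (G : Group) (X : Type) (i : X -> G).

Lemma lval_linv (a : letter X) : gmul (lval i a) (lval i (linv a)) = gone.
Proof. destruct a as [x []]; unfold lval, linv; simpl; [apply gmulV | apply gVmul]. Qed.

Lemma linvK (a : letter X) : linv (linv a) = a.
Proof. destruct a as [x b]; unfold linv; simpl; rewrite negb_involutive; reflexivity. Qed.

Lemma etgt_einv (e : edge G X) : etgt i (einv i e) = fst e.
Proof.
  destruct e as [u a]; unfold einv, etgt; simpl.
  rewrite <- gmulA, lval_linv, gmul1. reflexivity.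
Qed.

Lemma einvK (e : edge G X) : einv i (einv i e) = e.
Proof.
  unfold einv at 1. rewrite etgt_einv. destruct e as [u a]; simpl.
  rewrite linvK. reflexivity.
Qed.

End Letters.

Section SubgraphLattice.
Variables (G : Group) (X : Type).
Implicit Types A B C D E : subgraph G X.

Lemma sg_ext D E :
  (forall v, sv D v <-> sv E v) -> (forall e, se D e <-> se E e) -> D = E.
Proof.
  destruct D, E; simpl; intros Hv He; f_equal; apply functional_extensionality;
    intros; apply propositional_extensionality; auto.
Qed.

Lemma sub_le_refl D : sub_le D D.
Proof. split; auto. Qed.

Lemma sub_le_trans D E F : sub_le D E -> sub_le E F -> sub_le D F.
Proof. intros [] []; split; auto. Qed.

Lemma sub_le_antisym D E : sub_le D E -> sub_le E D -> D = E.
Proof. intros [] []; apply sg_ext; split; auto. Qed.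

Lemma sub_le_union_l D E : sub_le D (sg_union D E).
Proof. split; simpl; auto. Qed.

Lemma sub_le_union_r D E : sub_le E (sg_union D E).
Proof. split; simpl; auto. Qed.

Lemma union_sub_le D E F : sub_le D F -> sub_le E F -> sub_le (sg_union D E) F.
Proof. intros [] []; split; simpl; intros ? []; auto. Qed.

Lemma sg_union_absorb D E : sub_le E D -> sg_union D E = D.
Proof.
  intro H. apply sub_le_antisym; [apply union_sub_le | apply sub_le_union_l];
    auto using sub_le_refl.
Qed.

Lemma sg_translate1 D : sg_translate gone D = D.
Proof. apply sg_ext; simpl; intros; rewrite ginv1, g1mul; [tauto | destruct e; tauto]. Qed.

Lemma sg_translateM (g h : G) D :
  sg_translate g (sg_translate h D) = sg_translate (gmul g h) D.
Proof. apply sg_ext; simpl; intros; rewrite ginvM, gmulA; tauto. Qed.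

Lemma sg_translate_mono (g : G) D E : sub_le D E -> sub_le (sg_translate g D) (sg_translate g E).
Proof. intros []; split; simpl; auto. Qed.

Lemma sv_translate1 (g : G) D : sv D gone -> sv (sg_translate g D) g.
Proof. simpl. rewrite gVmul. auto. Qed.

Lemma finite_union D E : finite_sg D -> finite_sg E -> finite_sg (sg_union D E).
Proof.
  intros [[l1 H1] [l2 H2]] [[l3 H3] [l4 H4]]; split.
  - exists (l1 ++ l3). simpl; intros v []; apply in_or_app; auto.
  - exists (l2 ++ l4). simpl; intros v []; apply in_or_app; auto.
Qed.

Lemma finite_translate (g : G) D : finite_sg D -> finite_sg (sg_translate g D).
Proof.
  intros [[lv Hv] [le He]]; split.
  - exists (map (gmul g) lv). simpl; intros v Hgv.
    rewrite <- (gmulKVg g v). apply in_map. auto.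
  - exists (map (fun e => (gmul g (fst e), snd e)) le). simpl; intros [u a] Hua.
    apply He, in_map with (f := fun e => (gmul g (fst e), snd e)) in Hua.
    simpl in Hua. rewrite gmulKVg in Hua. exact Hua.
Qed.

Lemma finite_verts (l : list G) : finite_sg (@sg_verts G X l).
Proof. split; [exists l | exists nil]; simpl; tauto. Qed.

End SubgraphLattice.

(** * Walks and journeys *)

Section Walks.
Variables (G : Group) (X : Type) (i : X -> G).
Implicit Types D E : subgraph G X.

Lemma wval_app w1 w2 : wval i (w1 ++ w2) = gmul (wval i w1) (wval i w2).
Proof. induction w1 as [|a w1 IH]; simpl; [rewrite g1mul | rewrite IH, gmulA]; reflexivity. Qed.

Lemma walk_in_app D u w1 w2 :
  walk_in i D u (w1 ++ w2) <-> walk_in i D u w1 /\ walk_in i D (gmul u (wval i w1)) w2.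
Proof.
  revert u; induction w1 as [|a w1 IH]; intro u; simpl.
  - rewrite gmul1; tauto.
  - rewrite IH, gmulA; tauto.
Qed.

Lemma walk_in_mono D E u w : sub_le D E -> walk_in i D u w -> walk_in i E u w.
Proof. intros [_ HE]. revert u; induction w; simpl; intuition. Qed.

Lemma walk_in_translate (g : G) D u w :
  walk_in i (sg_translate g D) u w <-> walk_in i D (gmul (ginv g) u) w.
Proof. revert u; induction w as [|a w IH]; intro u; simpl; [|rewrite IH, gmulA]; tauto. Qed.

Definition reach D (x y : G) := exists w, walk_in i D x w /\ gmul x (wval i w) = y.

Lemma reach_refl D x : reach D x x.
Proof. exists nil; simpl; split; [exact I | apply gmul1]. Qed.

Lemma reach_trans D x y z : reach D x y -> reach D y z -> reach D x z.
Proof.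
  intros [w1 [W1 E1]] [w2 [W2 E2]]. exists (w1 ++ w2).
  rewrite walk_in_app, wval_app, gmulA, E1. auto.
Qed.

Lemma reach_mono D E x y : sub_le D E -> reach D x y -> reach E x y.
Proof. intros H [w [W Ew]]. exists w; split; [eapply walk_in_mono|]; eauto. Qed.

Lemma connected_of_hub D v : (forall x, sv D x -> reach D x v /\ reach D v x) -> connected i D.
Proof.
  intros H x y Hx Hy. exact (reach_trans (proj1 (H x Hx)) (proj2 (H y Hy))).
Qed.

End Walks.

Section Journeys.
Variables (G : Group) (X : Type) (i : X -> G).
Implicit Types (t : imterm X) (u g : G).

Fixpoint letters_only t : Prop :=
  match t with Iend => True | Ilet _ t' => letters_only t' | Im _ _ => False end.

Fixpoint of_word (w : list (letter X)) : imterm X :=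
  match w with nil => Iend | a :: w' => Ilet a (of_word w') end.

Fixpoint tapp t1 t2 : imterm X :=
  match t1 with
  | Iend => t2
  | Ilet a t => Ilet a (tapp t t2)
  | Im v t => Im v (tapp t t2)
  end.

Definition jgraph u t : subgraph G X := mkSG (jverts i u t) (jedges i u t).

Lemma jverts_start u t : jverts i u t u.
Proof. destruct t; simpl; auto. Qed.

Lemma jverts_end u t : jverts i u t (gmul u (im_gval i t)).
Proof.
  revert u; induction t as [|a t IH|v _ t IH]; intro u; simpl.
  - rewrite gmul1; reflexivity.
  - right. rewrite gmulA. apply IH.
  - right. rewrite gmulA. apply IH.
Qed.

Lemma im_gval_tapp t1 t2 : im_gval i (tapp t1 t2) = gmul (im_gval i t1) (im_gval i t2).
Proof.
  induction t1 as [|a t IH|v _ t IH]; simpl; rewrite ?IH, ?gmulA, ?g1mul; reflexivity.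
Qed.

Lemma tapp_Iend t : tapp t Iend = t.
Proof. induction t as [|a t IH|v _ t IH]; simpl; rewrite ?IH; reflexivity. Qed.

Lemma tappA t1 t2 t3 : tapp t1 (tapp t2 t3) = tapp (tapp t1 t2) t3.
Proof. induction t1 as [|a t IH|v _ t IH]; simpl; rewrite ?IH; reflexivity. Qed.

Lemma letters_only_tapp t1 t2 : letters_only t1 -> letters_only t2 -> letters_only (tapp t1 t2).
Proof. induction t1; simpl; tauto. Qed.

Lemma jgraph_tapp u t1 t2 :
  jgraph u (tapp t1 t2) = sg_union (jgraph u t1) (jgraph (gmul u (im_gval i t1)) t2).
Proof.
  apply sg_ext; simpl; intro x; revert u;
    induction t1 as [|a t IH|v _ t IH]; intro u; simpl; rewrite ?IH, ?gmul1, ?gmulA; try tauto.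
  split; [auto | intros [-> |]; auto using jverts_start].
Qed.

Lemma jgraph_Iend u : jgraph u Iend = @sg_verts G X (u :: nil).
Proof. apply sg_ext; simpl; intuition. Qed.

Lemma jgraph_Im u (v : imterm X) t :
  jgraph u (Im v t) = sg_union (@sg_verts G X (u :: nil)) (jgraph (gmul u (im_gval i v)) t).
Proof. apply sg_ext; simpl; intuition. Qed.

Lemma jgraph_translate g u t : sg_translate g (jgraph u t) = jgraph (gmul g u) t.
Proof.
  assert (Hv : forall u' x, gmul (ginv g) x = u' <-> x = gmul g u').
  { split; [intros <-; symmetry; apply gmulKVg | intros ->; apply gmulKg]. }
  assert (He : forall u' y (a b : letter X),
            (gmul (ginv g) y, b) = (u', a) <-> (y, b) = (gmul g u', a)).
  { split; intro E; inversion E; subst; f_equal; [symmetry; apply gmulKVg | apply gmulKg]. }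
  apply sg_ext; simpl; intro x; revert u;
    induction t as [|a t IH|v _ t IH]; intro u; simpl; rewrite ?IH, ?gmulA, ?Hv; try tauto.
  destruct x as [y b]; unfold einv, etgt; simpl. rewrite <- !gmulA, !He, !gmulA. tauto.
Qed.

Lemma jgraph_finite u t : finite_sg (jgraph u t).
Proof.
  revert u; induction t as [|a t IH|v _ t IH]; intro u.
  - rewrite jgraph_Iend. apply finite_verts.
  - destruct (IH (gmul u (lval i a))) as [[lv Hv] [le He]]. split.
    + exists (u :: lv); simpl; intros x [-> |]; auto.
    + exists ((u, a) :: einv i (u, a) :: le); simpl; intros e [-> |[-> |]]; auto.
  - rewrite jgraph_Im. apply finite_union; auto using finite_verts.
Qed.

Lemma jgraph_is_subgraph u t : is_subgraph i (jgraph u t).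
Proof.
  revert u; induction t as [|a t IH|v _ t IH]; intro u; unfold is_subgraph; simpl.
  - tauto.
  - intros e [-> |[-> |He]].
    + auto using jverts_start.
    + rewrite etgt_einv, einvK. simpl. auto using jverts_start.
    + destruct (IH _ e He) as (?&?&?). auto.
  - intros e He. destruct (IH _ e He) as (?&?&?). auto.
Qed.

Lemma im_gval_of_word w : im_gval i (of_word w) = wval i w.
Proof. induction w; simpl; congruence. Qed.

Lemma letters_only_of_word w : letters_only (of_word w).
Proof. induction w; simpl; auto. Qed.

Lemma letters_only_word t : letters_only t -> exists w, t = of_word w.
Proof.
  induction t as [|a t IH|]; simpl; try tauto.
  - exists nil; reflexivity.
  - intro H. destruct (IH H) as [w ->]. exists (a :: w); reflexivity.
Qed.

Lemma jgraph_of_walk D u w :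
  is_subgraph i D -> sv D u -> walk_in i D u w -> sub_le (jgraph u (of_word w)) D.
Proof.
  intro HD. revert u; induction w as [|a w IH]; intros u Hu Hw.
  - rewrite jgraph_Iend. split; simpl; [intros v [<- |[]] | tauto]; auto.
  - destruct Hw as [Hua Hw]. destruct (HD _ Hua) as (_ & Htgt & Hinv).
    destruct (IH _ Htgt Hw) as [IHv IHe].
    split; simpl; [intros v [-> |] | intros e [-> |[-> |]]]; auto.
Qed.

Lemma jgraph_edge_le D k a :
  is_subgraph i D -> se D (k, a) -> sub_le (jgraph k (Ilet a Iend)) D.
Proof.
  intros HD Hka. destruct (HD _ Hka) as (Hk & Hka' & Hinv).
  split; simpl; [intros v [-> | ->] | intros e [-> | [-> | []]]]; auto.
Qed.

Lemma jgraph_Ilet_linv u a :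
  jgraph (gmul u (lval i a)) (Ilet (linv a) Iend) = jgraph u (Ilet a Iend).
Proof.
  assert (Hback : einv i (u, a) = (gmul u (lval i a), linv a)) by reflexivity.
  apply sg_ext; simpl; intro x.
  - rewrite <- gmulA, lval_linv, gmul1. tauto.
  - rewrite <- Hback, einvK. tauto.
Qed.

Lemma sg_letter_jgraph x : sg_letter i x = jgraph gone (Ilet (x, true) Iend).
Proof.
  apply sg_ext; simpl; intros; unfold einv, etgt, lval, linv; simpl; rewrite ?g1mul; tauto.
Qed.

Lemma labels_journey_jgraph D g h t :
  labels_journey i D g h t <-> sub_le (jgraph g t) D /\ h = gmul g (im_gval i t).
Proof. unfold labels_journey, sub_le. simpl. tauto. Qed.

Lemma jgraph_reach_letters u t x : letters_only t -> jverts i u t x ->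
  reach i (jgraph u t) u x /\ reach i (jgraph u t) x u.
Proof.
  revert u; induction t as [|a t IH|]; intro u; simpl; try tauto.
  - intros _ ->. split; apply reach_refl.
  - intros Ht [-> | Hx]; [split; apply reach_refl |].
    assert (Hsub : sub_le (jgraph (gmul u (lval i a)) t) (jgraph u (Ilet a t))).
    { split; simpl; auto. }
    destruct (IH _ Ht Hx) as [Hto Hfrom].
    apply (reach_mono Hsub) in Hto, Hfrom. split; eapply reach_trans; eauto.
    + exists (a :: nil); simpl. rewrite gmul1. auto.
    + exists (linv a :: nil); simpl. rewrite gmul1, <- gmulA, lval_linv, gmul1. auto.
Qed.

Lemma jgraph_connected u t : letters_only t -> connected i (jgraph u t).
Proof.
  intro Ht. apply connected_of_hub with u.
  intros x Hx. apply and_comm, jgraph_reach_letters; auto.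
Qed.

End Journeys.

Section TermEvaluation.
Variables (T X : Type) (mul : T -> T -> T) (one : T) (inv : T -> T) (m : T -> T)
  (gen : X -> T).

Lemma word_eval_of_word w : word_eval mul one inv gen w = im_eval mul one inv m gen (of_word w).
Proof. induction w; simpl; congruence. Qed.

Fixpoint fterm_of_imterm (t : imterm X) : fterm X :=
  match t with
  | Iend => FOne
  | Ilet a t' => FMul (if snd a then FGen (fst a) else FInv (FGen (fst a))) (fterm_of_imterm t')
  | Im v t' => FMul (FM (fterm_of_imterm v)) (fterm_of_imterm t')
  end.

Lemma fterm_of_imterm_eval t :
  fterm_eval mul one inv m gen (fterm_of_imterm t) = im_eval mul one inv m gen t.
Proof.
  induction t as [| [x []] t IH | v IHv t IH]; simpl; unfold gen_l; simpl; congruence.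
Qed.

End TermEvaluation.

Section MembershipP.
Variables (G : Group) (X : Type) (i : X -> G) (conn : bool).
Local Notation P := (inP i conn).

Lemma inP_union A B : P A -> P B -> (exists v, sv A v /\ sv B v) -> P (sg_union A B).
Proof.
  intros [SA CA] [SB CB] [v [HvA HvB]]. split.
  - intros e [He | He]; simpl; [destruct (SA e He) as (?&?&?) | destruct (SB e He) as (?&?&?)];
      auto.
  - intro Hc. apply connected_of_hub with v. intros x [Hx | Hx]; split;
      [ apply (reach_mono (sub_le_union_l A B)), CA
      | apply (reach_mono (sub_le_union_l A B)), CA
      | apply (reach_mono (sub_le_union_r A B)), CB
      | apply (reach_mono (sub_le_union_r A B)), CB ]; auto.
Qed.

Lemma inP_translate g D : P D -> P (sg_translate g D).
Proof.
  intros [SD CD]. split.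
  - intros [u a] He. simpl in He. destruct (SD _ He) as (H1 & H2 & H3).
    unfold einv, etgt in *; simpl in *. rewrite !gmulA. auto.
  - intros Hc x y Hx Hy. destruct (CD Hc _ _ Hx Hy) as [w [W Ew]].
    exists w. rewrite walk_in_translate. split; [exact W |].
    rewrite <- (gmulKVg g x) at 1. rewrite <- gmulA, Ew. apply gmulKVg.
Qed.

(* The terms whose journeys are graphs of P: words for CSub, all Im_X-terms for Sub. *)
Definition admissible (t : imterm X) := conn = false \/ letters_only t.

Lemma admissible_tapp t1 t2 : admissible t1 -> admissible t2 -> admissible (tapp t1 t2).
Proof. intros [|] [|]; [left..| right; apply letters_only_tapp]; auto. Qed.

Lemma admissible_letters t : letters_only t -> admissible t.
Proof. right; assumption. Qed.

Lemma inP_jgraph u t : admissible t -> P (jgraph i u t).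
Proof.
  intro Ht. split; [apply jgraph_is_subgraph |].
  intro Hc. destruct Ht as [Hf | Hl]; [congruence | apply jgraph_connected; auto].
Qed.

Lemma inP_verts l : conn = false -> P (@sg_verts G X l).
Proof. intro Hc. split; [intros e [] | rewrite Hc; discriminate]. Qed.

End MembershipP.

Section ClosureFacts.
Variables (G : Group) (X : Type) (i : X -> G) (conn : bool) (c : subgraph G X -> subgraph G X).
Hypothesis c_closure : closure_op i conn c.
Local Notation P := (inP i conn).

Lemma closure_inP D : P D -> P (c D).
Proof. intro H; apply (proj1 c_closure D H). Qed.

Lemma closure_ext D : P D -> sub_le D (c D).
Proof. intro H; apply (proj1 c_closure D H). Qed.

Lemma closure_idem D : P D -> c (c D) = c D.
Proof. intro H; apply (proj1 c_closure D H). Qed.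

Lemma closure_mono D E : P D -> P E -> sub_le D E -> sub_le (c D) (c E).
Proof. apply (proj2 c_closure). Qed.

Lemma closure_least D E : P D -> P E -> sub_le D (c E) -> sub_le (c D) (c E).
Proof.
  intros HD HE H. rewrite <- (closure_idem HE). apply closure_mono; auto using closure_inP.
Qed.

Lemma closure_squeeze F U : P F -> P U -> sub_le F U -> sub_le U (c F) -> c U = c F.
Proof. intros. apply sub_le_antisym; [apply closure_least | apply closure_mono]; auto. Qed.

Lemma closure_union_closure A B : P A -> P B -> (exists v, sv A v /\ sv B v) ->
  c (sg_union (c A) (c B)) = c (sg_union A B).
Proof.
  intros HA HB [v [HvA HvB]].
  assert (HU : P (sg_union A B)) by (apply inP_union; eauto).
  assert (HcU : P (sg_union (c A) (c B))).
  { apply inP_union; auto using closure_inP.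
    exists v; split; [apply (closure_ext HA) | apply (closure_ext HB)]; auto. }
  apply sub_le_antisym.
  - apply closure_least; auto. apply union_sub_le; apply closure_mono; auto.
    + apply sub_le_union_l.
    + apply sub_le_union_r.
  - apply closure_mono; auto.
    apply union_sub_le; (eapply sub_le_trans; [apply closure_ext; auto |]);
      [apply sub_le_union_l | apply sub_le_union_r].
Qed.

End ClosureFacts.

(** * The monoid S_c *)

Section ScMonoid.
Variables (G : Group) (X : Type) (i : X -> G) (conn : bool) (c : subgraph G X -> subgraph G X).
Hypothesis c_closure : closure_op i conn c.
Hypothesis c_invariant : G_invariant i conn c.
Local Notation P := (inP i conn).
Local Notation adm := (admissible conn).
Local Notation S := (Sc i conn c).
Local Notation mul := (Sc_mul c).
Local Notation inv := (@Sc_inv G X).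
Local Notation one := (Sc_one c).

Lemma Sc_inP p : S p -> P (fst p).
Proof. intros [[F [HF [_ ->]]] _]. apply (closure_inP c_closure); auto. Qed.

Lemma Sc_closed p : S p -> c (fst p) = fst p.
Proof. intros [[F [HF [_ ->]]] _]. apply (closure_idem c_closure); auto. Qed.

Lemma Sc_inP_mul p q : S p -> S q -> P (sg_union (fst p) (sg_translate (snd p) (fst q))).
Proof.
  intros Hp Hq. apply inP_union; auto using Sc_inP, inP_translate.
  exists (snd p). split; [apply Hp | apply sv_translate1, Hq].
Qed.

Lemma Sc_mul_sup p q : S p -> S q ->
  sub_le (fst p) (fst (mul p q)) /\ sub_le (sg_translate (snd p) (fst q)) (fst (mul p q)).
Proof.
  intros Hp Hq. pose proof (closure_ext c_closure (Sc_inP_mul Hp Hq)) as H.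
  split; (eapply sub_le_trans; [| exact H]); [apply sub_le_union_l | apply sub_le_union_r].
Qed.

Lemma Sc_mul_absorb p q : c (fst p) = fst p -> sub_le (sg_translate (snd p) (fst q)) (fst p) ->
  mul p q = (fst p, gmul (snd p) (snd q)).
Proof. intros Hp H. unfold Sc_mul. rewrite sg_union_absorb; auto. rewrite Hp. reflexivity. Qed.

Lemma Sc_mulV a : S a -> mul a (inv a) = (fst a, gone).
Proof.
  intro Ha. rewrite Sc_mul_absorb; simpl; auto using Sc_closed.
  - rewrite gmulV. reflexivity.
  - rewrite sg_translateM, gmulV, sg_translate1. apply sub_le_refl.
Qed.

Lemma Sc_invK a : inv (inv a) = a.
Proof.
  destruct a as [D g]. unfold Sc_inv; simpl.
  rewrite ginvK, sg_translateM, gmulV, sg_translate1. reflexivity.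
Qed.

Lemma Sc_inv_closed p : S p -> S (inv p).
Proof.
  intros [[F [HF [Hfin Ep]]] [H1 Hg]]. split; [| split]; simpl.
  - exists (sg_translate (ginv (snd p)) F). rewrite Ep, c_invariant; auto.
    split; [apply inP_translate | split; [apply finite_translate |]]; auto.
  - rewrite ginvK, gmul1. exact Hg.
  - rewrite ginvK, gmulV. exact H1.
Qed.

Lemma Sc_mul_closure A B g h : P A -> P B -> sv A g -> sv B gone ->
  mul (c A, g) (c B, h) = (c (sg_union A (sg_translate g B)), gmul g h).
Proof.
  intros HA HB Hg H1. unfold Sc_mul; simpl.
  rewrite <- c_invariant, (closure_union_closure c_closure);
    auto using inP_translate.
  exists g. split; [| apply sv_translate1]; auto.
Qed.

Definition journey_elt (t : imterm X) : subgraph G X * G := (c (jgraph i gone t), im_gval i t).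

Lemma Sc_one_journey : one = journey_elt Iend.
Proof. unfold journey_elt, Sc_one. rewrite jgraph_Iend. reflexivity. Qed.

Lemma Sc_journey_elt t : adm t -> S (journey_elt t).
Proof.
  intro Ht. pose proof (closure_ext c_closure (inP_jgraph i gone Ht)) as [Hv _].
  split; [| split]; simpl.
  - exists (jgraph i gone t). split; [apply inP_jgraph | split; [apply jgraph_finite |]]; auto.
  - apply Hv, jverts_start.
  - apply Hv. rewrite <- (g1mul (im_gval i t)). apply jverts_end.
Qed.

Lemma mul_journey_elt t1 t2 : adm t1 -> adm t2 ->
  mul (journey_elt t1) (journey_elt t2) = journey_elt (tapp t1 t2).
Proof.
  intros H1 H2. unfold journey_elt. rewrite Sc_mul_closure; auto using inP_jgraph, jverts_start.
  - rewrite jgraph_translate, jgraph_tapp, im_gval_tapp, gmul1, g1mul. reflexivity.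
  - rewrite <- (g1mul (im_gval i t1)). apply jverts_end.
  - apply jverts_start.
Qed.

Hypothesis X_gen : X_generated i.

Lemma journey_between D u x : P D -> sv D u -> sv D x ->
  exists t, adm t /\ sub_le (jgraph i u t) D /\ gmul u (im_gval i t) = x.
Proof.
  intros HD Hu Hx. destruct conn eqn:Hc.
  - destruct (proj2 HD eq_refl u x Hu Hx) as [w [W Ew]].
    exists (of_word w). rewrite im_gval_of_word.
    split; [apply admissible_letters, letters_only_of_word |]. split; auto.
    apply jgraph_of_walk; auto. apply HD.
  - destruct (X_gen (gmul (ginv u) x)) as [w Ew].
    exists (Im (of_word w) Iend). simpl. rewrite im_gval_of_word, Ew, gmul1, gmulKVg.
    split; [left; reflexivity | split; auto].
    rewrite jgraph_Im, jgraph_Iend, im_gval_of_word, Ew, gmulKVg.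
    split; simpl; [intros v [[<- | []] | [<- | []]] | intros e [[] | []]]; auto.
Qed.

Lemma journey_loop D g k s : P D -> sv D g -> adm s -> sub_le (jgraph i k s) D ->
  exists t, adm t /\ sub_le (jgraph i g t) D /\ sub_le (jgraph i k s) (jgraph i g t) /\
    gmul g (im_gval i t) = g.
Proof.
  intros HD Hg Hs Hks. pose proof Hks as [Hksv _].
  destruct (journey_between HD Hg (Hksv _ (jverts_start i k s))) as [t1 (A1 & L1 & E1)].
  destruct (journey_between HD (Hksv _ (jverts_end i k s)) Hg) as [t2 (A2 & L2 & E2)].
  exists (tapp t1 (tapp s t2)).
  rewrite !jgraph_tapp, !im_gval_tapp, !gmulA, E1, E2.
  split; [apply admissible_tapp; auto; apply admissible_tapp; auto |].
  split; [repeat apply union_sub_le; auto | split; [|reflexivity]].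
  eapply sub_le_trans; [apply sub_le_union_l | apply sub_le_union_r].
Qed.

(* A piece (k, s) is covered by a loop at g through it; the vertices and edges of a finite F
   are the pieces (k, Iend) and (k, Ilet a Iend). *)
Lemma journey_cover_pieces D g (L : list (G * imterm X)) : P D -> sv D gone -> sv D g ->
  exists t, adm t /\ sub_le (jgraph i gone t) D /\ im_gval i t = g /\
    forall k s, In (k, s) L -> adm s -> sub_le (jgraph i k s) D ->
      sub_le (jgraph i k s) (jgraph i gone t).
Proof.
  intros HD H1 Hg. induction L as [|[k s] L IH].
  - destruct (journey_between HD H1 Hg) as [t (A & Lt & Et)].
    exists t. rewrite g1mul in Et. simpl. tauto.
  - destruct IH as [t (A & Lt & Et & Cov)].
    destruct (classic (adm s /\ sub_le (jgraph i k s) D)) as [[Hs Hks] | Hout].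
    + destruct (journey_loop HD Hg Hs Hks) as [l (Al & Ll & Cl & El)].
      exists (tapp t l). rewrite jgraph_tapp, im_gval_tapp, g1mul, Et, El.
      split; [apply admissible_tapp |]; auto. split; [apply union_sub_le |]; auto.
      split; [reflexivity |]. intros k' s' [E | Hin] Hs' Hks'.
      * inversion E; subst. eapply sub_le_trans; [exact Cl | apply sub_le_union_r].
      * eapply sub_le_trans; [apply Cov | apply sub_le_union_l]; auto.
    + exists t. split; auto. split; auto. split; auto.
      intros k' s' [E | Hin] Hs' Hks'; [inversion E; subst; tauto | auto].
Qed.

Lemma journey_cover D F g : P D -> finite_sg F -> sub_le F D -> sv D gone -> sv D g ->
  exists t, adm t /\ sub_le (jgraph i gone t) D /\ sub_le F (jgraph i gone t) /\
    im_gval i t = g.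
Proof.
  intros HD [[lv Hlv] [le Hle]] [HFv HFe] H1 Hg.
  destruct (journey_cover_pieces
              (map (fun v => (v, Iend)) lv ++ map (fun e => (fst e, Ilet (snd e) Iend)) le)
              HD H1 Hg) as [t (A & Lt & Et & Cov)].
  exists t. split; auto. split; auto. split; auto. split.
  - intros v Hv. refine (proj1 (Cov v Iend _ _ _) v _); simpl; auto.
    + apply in_or_app. left. apply in_map_iff. eauto.
    + apply admissible_letters. exact I.
    + split; simpl; [intros x ->; auto | tauto].
  - intros [k a] He. refine (proj2 (Cov k (Ilet a Iend) _ _ _) (k, a) _); simpl; auto.
    + apply in_or_app. right. apply in_map_iff. exists (k, a). auto.
    + apply admissible_letters. exact I.
    + apply jgraph_edge_le; auto. apply HD.
Qed.

Lemma Sc_journey_form p : S p -> exists t, adm t /\ p = journey_elt t.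
Proof.
  intros [[F [HF [Hfin Ep]]] [H1 Hg]].
  assert (HD : P (fst p)) by (rewrite Ep; apply (closure_inP c_closure); auto).
  assert (HFD : sub_le F (fst p)) by (rewrite Ep; apply (closure_ext c_closure); auto).
  destruct (journey_cover HD Hfin HFD H1 Hg) as [t (A & Lt & Ft & Et)].
  exists t. split; auto. destruct p as [D g]. unfold journey_elt. simpl in *. subst.
  f_equal. symmetry. apply (closure_squeeze c_closure); auto using inP_jgraph.
Qed.

Lemma Sc_mul_closed p q : S p -> S q -> S (mul p q).
Proof.
  intros Hp Hq.
  destruct (Sc_journey_form Hp) as [t1 [A1 ->]], (Sc_journey_form Hq) as [t2 [A2 ->]].
  rewrite mul_journey_elt by auto. apply Sc_journey_elt, admissible_tapp; auto.
Qed.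

Lemma Sc_one_in : S one.
Proof. rewrite Sc_one_journey. apply Sc_journey_elt, admissible_letters. exact I. Qed.

Lemma Sc_mulA a b d : S a -> S b -> S d -> mul a (mul b d) = mul (mul a b) d.
Proof.
  intros Ha Hb Hd. destruct (Sc_journey_form Ha) as [t1 [A1 ->]],
    (Sc_journey_form Hb) as [t2 [A2 ->]], (Sc_journey_form Hd) as [t3 [A3 ->]].
  rewrite !mul_journey_elt, tappA; auto using admissible_tapp.
Qed.

Lemma Sc_1mul a : S a -> mul one a = a.
Proof.
  intro Ha. destruct (Sc_journey_form Ha) as [t [A ->]].
  rewrite Sc_one_journey, mul_journey_elt; auto. apply admissible_letters. exact I.
Qed.

Lemma Sc_mul1 a : S a -> mul a one = a.
Proof.
  intro Ha. destruct (Sc_journey_form Ha) as [t [A ->]].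
  rewrite Sc_one_journey, mul_journey_elt, tapp_Iend; auto. apply admissible_letters. exact I.
Qed.

Lemma Sc_regular a : S a -> mul (mul a (inv a)) a = a.
Proof.
  intro Ha. rewrite Sc_mulV, Sc_mul_absorb; simpl; auto using Sc_closed.
  - rewrite g1mul. destruct a; reflexivity.
  - rewrite sg_translate1. apply sub_le_refl.
Qed.

Lemma Sc_inv_unique a b : S a -> S b ->
  mul (mul a b) a = a -> mul (mul b a) b = b -> b = inv a.
Proof.
  intros Ha Hb Ea Eb.
  assert (Hg : snd b = ginv (snd a)).
  { apply (f_equal snd) in Ea. simpl in Ea. rewrite <- gmulA in Ea.
    apply gmul_eq_self in Ea.
    rewrite <- (gmul1 (snd b)), <- (gmulV (snd a)), gmulA, Ea, g1mul. reflexivity. }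
  assert (Lab : sub_le (sg_translate (snd a) (fst b)) (fst a)).
  { rewrite <- Ea at 2. eapply sub_le_trans; apply Sc_mul_sup; auto using Sc_mul_closed. }
  assert (Lba : sub_le (sg_translate (snd b) (fst a)) (fst b)).
  { rewrite <- Eb at 2. eapply sub_le_trans; apply Sc_mul_sup; auto using Sc_mul_closed. }
  destruct b as [E h]. unfold Sc_inv. simpl in *. subst h. f_equal.
  apply sub_le_antisym; auto.
  apply (sg_translate_mono (ginv (snd a))) in Lab.
  rewrite sg_translateM, gVmul, sg_translate1 in Lab. exact Lab.
Qed.

Lemma Sc_idempotentP e : S e -> (idempotent S mul e <-> snd e = gone).
Proof.
  intro He. split.
  - intros [_ E]. apply (f_equal snd), gmul_eq_self in E. exact E.
  - intro E1. split; auto. rewrite Sc_mul_absorb, E1, g1mul; auto using Sc_closed.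
    + destruct e; simpl in *; subst; reflexivity.
    + rewrite E1, sg_translate1. apply sub_le_refl.
Qed.

Lemma Sc_E_unitary : E_unitary S mul.
Proof.
  intros e s Hs He Hes. pose proof (proj1 He) as Se.
  apply Sc_idempotentP in He; auto. apply Sc_idempotentP in Hes; [| apply Sc_mul_closed; auto].
  apply Sc_idempotentP; auto. simpl in Hes. rewrite He, g1mul in Hes. exact Hes.
Qed.

Lemma Sc_sigma_iff a b : S a -> S b -> (snd a = snd b <-> sigma_rel S mul a b).
Proof.
  intros Ha Hb. split.
  - intro Eab.
    set (U := sg_union (fst a) (fst b)).
    assert (HU : P U).
    { apply inP_union; auto using Sc_inP. exists gone; split; apply Ha || apply Hb. }
    assert (Hmerge : forall d, sub_le (fst d) U -> mul (c U, gone) d = (c U, snd d)).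
    { intros d Hd. rewrite Sc_mul_absorb; simpl.
      - rewrite g1mul. reflexivity.
      - apply (closure_idem c_closure HU).
      - rewrite sg_translate1. eapply sub_le_trans; [exact Hd | apply (closure_ext c_closure HU)]. }
    assert (EU : mul (mul a (inv a)) (mul b (inv b)) = (c U, gone)).
    { rewrite !Sc_mulV; auto. unfold Sc_mul; simpl. rewrite sg_translate1, g1mul. reflexivity. }
    exists (c U, gone). split.
    + apply Sc_idempotentP; auto. rewrite <- EU.
      apply Sc_mul_closed; apply Sc_mul_closed; auto using Sc_inv_closed.
    + rewrite !Hmerge, Eab; unfold U; auto using sub_le_union_l, sub_le_union_r.
  - intros [e [_ E]]. apply (f_equal snd), gmulI in E. exact E.
Qed.

Lemma Sc_nat_le_iff p q : S p -> S q ->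
  (nat_le S mul p q <-> snd p = snd q /\ sub_le (fst q) (fst p)).
Proof.
  intros Hp Hq. split.
  - intros [e [He ->]]. pose proof (proj1 He) as Se. apply Sc_idempotentP in He; auto.
    simpl. rewrite He, g1mul. split; auto.
    pose proof (proj2 (Sc_mul_sup Se Hq)) as H. simpl in H.
    rewrite He, sg_translate1 in H. rewrite sg_translate1. exact H.
  - intros [Es Lqp]. exists (mul p (inv p)). split.
    + apply Sc_idempotentP; auto using Sc_mul_closed, Sc_inv_closed.
      rewrite Sc_mulV; auto.
    + rewrite Sc_mulV, Sc_mul_absorb; simpl; auto using Sc_closed.
      * rewrite g1mul, <- Es. destruct p; reflexivity.
      * rewrite sg_translate1. exact Lqp.
Qed.

Lemma Sc_snd_surj g : exists a, S a /\ snd a = g.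
Proof.
  destruct (X_gen g) as [w Ew]. exists (journey_elt (of_word w)). split.
  - apply Sc_journey_elt, admissible_letters, letters_only_of_word.
  - simpl. rewrite im_gval_of_word. exact Ew.
Qed.

Local Notation gen := (Sc_gen i c).
Local Notation m := (Sc_m c).
Local Notation eval := (im_eval mul one inv m gen).

Lemma gen_l_journey a : gen_l inv gen a = journey_elt (Ilet a Iend).
Proof.
  unfold journey_elt. simpl. rewrite gmul1.
  destruct a as [x []]; unfold gen_l, Sc_gen, Sc_inv; simpl; rewrite sg_letter_jgraph;
    [reflexivity |].
  rewrite <- c_invariant by (apply inP_jgraph, admissible_letters; exact I).
  rewrite jgraph_translate, gmul1, <- (jgraph_Ilet_linv i gone (x, false)), g1mul.
  reflexivity.
Qed.

Lemma Sc_gen_in x : S (gen x).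
Proof.
  change (gen x) with (gen_l inv gen (x, true)). rewrite gen_l_journey.
  apply Sc_journey_elt, admissible_letters. exact I.
Qed.

Lemma Sc_m_journey p v : snd p = im_gval i v -> m p = journey_elt (Im v Iend).
Proof.
  intro E. unfold Sc_m, journey_elt. simpl. rewrite jgraph_Im, jgraph_Iend, g1mul, gmul1, E.
  f_equal. f_equal. apply sg_ext; simpl; tauto.
Qed.

Lemma im_eval_snd t : snd (eval t) = im_gval i t.
Proof.
  induction t as [|a t IH|v IHv t IH]; simpl; rewrite ?IH;
    [reflexivity | | rewrite IHv; reflexivity].
  destruct a as [x []]; reflexivity.
Qed.

Lemma im_eval_journey t : adm t -> eval t = journey_elt t.
Proof.
  induction t as [|a t IH|v _ t IH]; intro Ht; simpl.
  - apply Sc_one_journey.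
  - assert (At : adm t) by (destruct Ht; [left | right]; auto).
    rewrite gen_l_journey, IH, mul_journey_elt; auto. apply admissible_letters. exact I.
  - assert (Hc : conn = false) by (destruct Ht as [| []]; auto).
    rewrite (Sc_m_journey (im_eval_snd v)), IH, mul_journey_elt; auto; left; exact Hc.
Qed.

Lemma Sc_term_rep p : S p -> exists t, adm t /\ eval t = p.
Proof.
  intro Hp. destruct (Sc_journey_form Hp) as [t [A ->]]. exists t. auto using im_eval_journey.
Qed.

Lemma Sc_R_rel_iff p t : S p -> (R_rel S mul p t <-> S t /\ fst t = fst p).
Proof.
  intro Hp. split.
  - intros [u [v (Hu & Hv & Et & Ep)]].
    assert (Ht : S t) by (subst t; apply Sc_mul_closed; auto).
    split; auto. apply sub_le_antisym.
    + rewrite Ep. apply Sc_mul_sup; auto.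
    + rewrite Et. apply Sc_mul_sup; auto.
  - intros [Ht E]. exists (mul (inv p) t), (mul (inv t) p).
    split; [| split]; [apply Sc_mul_closed; auto using Sc_inv_closed .. | split].
    + rewrite Sc_mulA, Sc_mulV, <- E, <- Sc_mulV, Sc_regular; auto using Sc_inv_closed.
    + rewrite Sc_mulA, Sc_mulV, E, <- Sc_mulV, Sc_regular; auto using Sc_inv_closed.
Qed.

Lemma Sc_mul_gen_l t a : S t -> mul t (gen_l inv gen a) =
  (c (sg_union (fst t) (jgraph i (snd t) (Ilet a Iend))), gmul (snd t) (lval i a)).
Proof.
  intro Ht. rewrite gen_l_journey. unfold journey_elt. destruct t as [D g]. simpl.
  rewrite <- (Sc_closed Ht) at 1. simpl.
  rewrite Sc_mul_closure.
  - rewrite jgraph_translate, !gmul1. reflexivity.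
  - apply (Sc_inP Ht).
  - apply inP_jgraph, admissible_letters. exact I.
  - apply Ht.
  - apply jverts_start.
Qed.

Lemma Sc_R_rel_mul_gen_iff p t a : S p -> S t -> fst t = fst p ->
  (R_rel S mul p (mul t (gen_l inv gen a)) <-> se (fst p) (snd t, a)).
Proof.
  intros Hp Ht E.
  assert (HU : P (sg_union (fst t) (jgraph i (snd t) (Ilet a Iend)))).
  { apply inP_union; [apply (Sc_inP Ht) | apply inP_jgraph, admissible_letters; exact I |].
    exists (snd t); split; [apply Ht | apply jverts_start]. }
  rewrite Sc_R_rel_iff, Sc_mul_gen_l; auto. simpl. split.
  - intros [_ <-]. apply (closure_ext c_closure HU). simpl. auto.
  - intro He. split.
    + rewrite <- Sc_mul_gen_l; auto. apply Sc_mul_closed; auto.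
      rewrite gen_l_journey. apply Sc_journey_elt, admissible_letters. exact I.
    + rewrite sg_union_absorb, E; auto using Sc_closed.
      rewrite E. apply jgraph_edge_le; auto. apply (Sc_inP Hp).
Qed.

(* The R-class of p is {(fst p, h) : h in fst p}, so the second coordinate is the iso. *)
Lemma Sc_schutz_iso p : S p -> schutz_iso S mul inv gen p i (fst p).
Proof.
  intro Hp.
  assert (Hin : forall k, sv (fst p) k -> S (fst p, k)).
  { intros k Hk. split; [apply Hp | split; [apply Hp | exact Hk]]. }
  exists snd, (fun e => (snd (fst e), snd e)).
  split; [| split; [| split; [| split; [| split; [| split]]]]].
  - intros v [_ Rv]. apply (Sc_R_rel_iff _ Hp) in Rv as [Sv <-]. apply Sv.
  - intros [D v] [D' w] [_ Rv] [_ Rw] Evw. simpl in Evw.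
    apply (Sc_R_rel_iff _ Hp) in Rv as [_ Ev], Rw as [_ Ew]. simpl in *. congruence.
  - intros y Hy. exists (fst p, y). rewrite Sc_R_rel_iff; auto using Hin.
  - intros [t a] (Ht & Rt & Rta). simpl in *. apply (Sc_R_rel_iff _ Hp) in Rt as [_ E].
    apply Sc_R_rel_mul_gen_iff in Rta; auto.
  - intros [t a] [t' a'] (Ht & Rt & _) (Ht' & Rt' & _) Ee. simpl in *.
    apply (Sc_R_rel_iff _ Hp) in Rt as [_ E], Rt' as [_ E'].
    inversion Ee. destruct t, t'; simpl in *; subst. reflexivity.
  - intros [k a] Hka. assert (Hk : sv (fst p) k) by apply (proj1 (Sc_inP Hp) _ Hka).
    exists ((fst p, k), a). pose proof (Hin k Hk).
    simpl. rewrite Sc_R_rel_iff, Sc_R_rel_mul_gen_iff; simpl; auto.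
  - intros [t a] _. simpl. destruct a as [x []]; repeat split.
Qed.

Lemma Sc_X_generated (Hc : conn = true) : X_gen_inverse_monoid S mul one inv gen.
Proof.
  split; [exact Sc_gen_in |]. intros s Hs. destruct (Sc_term_rep Hs) as [t [[H | Ht] E]].
  - congruence.
  - destruct (letters_only_word Ht) as [w ->]. exists w.
    rewrite (word_eval_of_word mul one inv m). exact E.
Qed.

Lemma Sc_X_generated_F : X_gen_F_inverse_monoid S mul one inv m gen.
Proof.
  split; [exact Sc_gen_in |]. intros s Hs. destruct (Sc_term_rep Hs) as [t [_ E]].
  exists (fterm_of_imterm t). rewrite fterm_of_imterm_eval. exact E.
Qed.

Lemma Sc_F_inverse (Hc : conn = false) : F_inverse_with S mul m.
Proof.
  intros a Ha.
  assert (HV : P (@sg_verts G X (gone :: snd a :: nil))) by (apply inP_verts; auto).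
  assert (Hm : S (m a)).
  { split; [exists (@sg_verts G X (gone :: snd a :: nil)); auto using finite_verts |].
    simpl. split; apply (closure_ext c_closure HV); simpl; auto. }
  split; auto. split; [apply Sc_sigma_iff; auto |].
  intros b Hb Hs. apply Sc_sigma_iff in Hs; auto. apply Sc_nat_le_iff; auto. split; auto.
  simpl. rewrite <- (Sc_closed Hb). apply (closure_mono c_closure); auto using Sc_inP.
  split; simpl; [intros v [<- | [<- | []]] | tauto].
  - apply Hb.
  - rewrite <- Hs. apply Hb.
Qed.

Lemma labels_journey_iff (Hc : conn = false) D g h u : P D -> c D = D ->
  (labels_journey i D g h u <->
     sub_le (sg_translate g (c (jgraph i gone u))) D /\ h = gmul g (im_gval i u)).
Proof.
  intros HD HcD. assert (HJ : P (jgraph i gone u)) by (apply inP_jgraph; left; auto).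
  rewrite labels_journey_jgraph, <- (gmul1 g) at 1. rewrite <- jgraph_translate.
  split; intros [L Eh]; split; auto.
  - rewrite <- c_invariant, <- HcD; auto. apply (closure_mono c_closure); auto using inP_translate.
  - eapply sub_le_trans; [apply sg_translate_mono, (closure_ext c_closure HJ) | exact L].
Qed.

Lemma cS_closed_detour (Hc : conn = false) E w k s :
  cS_closed i mul one inv m gen E -> sub_le (jgraph i gone w) E ->
  sub_le (jgraph i k s) (c (jgraph i gone w)) -> sub_le (jgraph i k s) E.
Proof.
  intros HE Lw Ls. pose proof Ls as [Lsv _].
  assert (HJ : P (jgraph i gone w)) by (apply inP_jgraph; left; auto).
  pose proof (closure_ext c_closure HJ) as Lwc.
  destruct (X_gen k) as [w1 E1], (X_gen (ginv (gmul k (im_gval i s)))) as [w2 E2].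
  (* v jumps to k, follows s, jumps back to 1 and follows w: same value as w in S_c. *)
  set (v := Im (of_word w1) (tapp s (Im (of_word w2) w))).
  assert (Jv : jgraph i gone v =
     sg_union (@sg_verts G X (gone :: nil)) (sg_union (jgraph i k s)
       (sg_union (@sg_verts G X (gmul k (im_gval i s) :: nil)) (jgraph i gone w)))).
  { unfold v. rewrite jgraph_Im, jgraph_tapp, jgraph_Im, !im_gval_of_word, E1, E2, g1mul, gmulV.
    reflexivity. }
  assert (Gv : im_gval i v = im_gval i w).
  { unfold v; simpl. rewrite im_gval_tapp. simpl. rewrite !im_gval_of_word, E1, E2.
    rewrite gmulA, gmulKVg. reflexivity. }
  assert (Lvc : sub_le (jgraph i gone v) (c (jgraph i gone w))).
  { rewrite Jv. repeat apply union_sub_le; auto.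
    - split; simpl; [intros x [<- | []]; apply Lwc, jverts_start | tauto].
    - split; simpl; [intros x [<- | []]; apply Lsv, jverts_end | tauto]. }
  assert (Ev : im_eval mul one inv m gen w = im_eval mul one inv m gen v).
  { rewrite !im_eval_journey by (left; exact Hc). unfold journey_elt. rewrite Gv. f_equal.
    symmetry. apply (closure_squeeze c_closure); auto. apply inP_jgraph. left; exact Hc.
    rewrite Jv. repeat (eapply sub_le_trans; [| apply sub_le_union_r]). apply sub_le_refl. }
  assert (Hw : labels_journey i E gone (im_gval i w) w)
    by (apply labels_journey_jgraph; rewrite g1mul; auto).
  pose proof Lw as [Lwv _].
  assert (Hv : labels_journey i E gone (im_gval i w) v).
  { apply (HE w v Ev); [apply Lwv, jverts_start | | exact Hw].
    rewrite <- (g1mul (im_gval i w)). apply Lwv, jverts_end. }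
  apply labels_journey_jgraph in Hv as [Lv _].
  eapply sub_le_trans; [| exact Lv]. rewrite Jv.
  eapply sub_le_trans; [apply sub_le_union_l | apply sub_le_union_r].
Qed.

Lemma Sc_F_schutz_graph (Hc : conn = false) p : S p -> F_schutz_graph i mul one inv m gen p (fst p).
Proof.
  intro Hp. split; [destruct (Sc_term_rep Hp) as [t [_ E]]; eauto |].
  intros w Ew. assert (Aw : adm w) by (left; exact Hc).
  rewrite im_eval_journey in Ew by auto. subst p. simpl.
  assert (HJ : P (jgraph i gone w)) by (apply inP_jgraph; auto).
  assert (HD : P (c (jgraph i gone w))) by (apply (closure_inP c_closure); auto).
  split; [apply HD |]. split; [| split; [apply (closure_ext c_closure HJ) |]].
  - intros u v Euv g h _ _. rewrite !im_eval_journey in Euv by (left; exact Hc).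
    injection Euv as Ec Eg. pose proof (closure_idem c_closure HJ) as HcD.
    rewrite !(labels_journey_iff Hc) by auto. rewrite Ec, Eg. reflexivity.
  - intros E _ HE Lw. split.
    + intros k Hk. apply (cS_closed_detour (k := k) (s := Iend) Hc HE Lw); [| apply jverts_start].
      rewrite jgraph_Iend. split; simpl; [intros x [<- | []]; exact Hk | tauto].
    + intros [k a] Hka. apply (cS_closed_detour (k := k) (s := Ilet a Iend) Hc HE Lw); simpl; auto.
      apply jgraph_edge_le; [apply HD | exact Hka].
Qed.

Lemma Sc_inverse_monoid : inverse_monoid S mul one inv.
Proof.
  split; [split; [exact Sc_one_in | split; [exact Sc_mul_closed | exact Sc_inv_closed]] |].
  split; [exact Sc_mulA | split].
  - intros a Ha. split; [apply Sc_1mul | apply Sc_mul1]; auto.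
  - intros a Ha. split; [apply Sc_regular; auto |].
    split; [| intros b Hb; apply Sc_inv_unique; auto].
    rewrite <- (Sc_invK a) at 2. apply Sc_regular, Sc_inv_closed; auto.
Qed.

Lemma Sc_greatest_group_image : @greatest_group_image _ S mul one G snd.
Proof.
  split; [reflexivity | split; [reflexivity | split]].
  - exact Sc_snd_surj.
  - exact Sc_sigma_iff.
Qed.

End ScMonoid.

Theorem mainTheorem5 (G : Group) (X : Type) (i : X -> G) (conn : bool)
  (c : subgraph G X -> subgraph G X) :
  X_generated i ->
  closure_op i conn c ->
  G_invariant i conn c ->
  let S := Sc i conn c in
  let mul := Sc_mul c in
  let one := Sc_one c in
  let inv := @Sc_inv G X in
  let gen := Sc_gen i c in
  inverse_monoid S mul one inv /\
  E_unitary S mul /\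
  @greatest_group_image _ S mul one G snd /\
  (forall p q, S p -> S q ->
     (nat_le S mul p q <-> snd p = snd q /\ sub_le (fst q) (fst p))) /\
  (conn = true ->
     X_gen_inverse_monoid S mul one inv gen /\
     (forall p, S p -> schutz_iso S mul inv gen p i (fst p))) /\
  (conn = false ->
     F_inverse_with S mul (Sc_m c) /\
     X_gen_F_inverse_monoid S mul one inv (Sc_m c) gen /\
     (forall p, S p -> F_schutz_graph i mul one inv (Sc_m c) gen p (fst p))).
Proof.
  intros HX Hcl Hinv. cbv zeta.
  split; [exact (Sc_inverse_monoid Hcl Hinv HX) |].
  split; [exact (Sc_E_unitary Hcl Hinv HX) |].
  split; [exact (Sc_greatest_group_image Hcl Hinv HX) |].
  split; [exact (Sc_nat_le_iff Hcl Hinv HX) |].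
  split; intro Hc.
  - split; [exact (Sc_X_generated Hcl Hinv HX Hc) | exact (Sc_schutz_iso Hcl Hinv HX)].
  - split; [exact (Sc_F_inverse Hcl Hinv HX Hc) |].
    split; [exact (Sc_X_generated_F Hcl Hinv HX) | exact (Sc_F_schutz_graph Hcl Hinv HX Hc)].
Qed.
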